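(* Let $M=\frac32-\sqrt2$. For real $f_1,f_2,f_3,y_1,y_2,y_3$ put $$\hat A=(1-f_1)(1-y_1)+(1-f_2)(1-y_2)+2(1-f_3)(1-y_3),\qquad \hat F_1=\frac{(1-f_1)(1-y_1)}{\hat A},$$ $$P_1=\frac{y_1(\frac12-y_1)}{1-y_1}-\frac{4Mf_2}{1-f_1},\quad P_2=(1-f_2)\,y_2(\tfrac12-y_2)+4Mf_1(1-y_2),\quad P_3=2(1-f_3)\,y_3(\tfrac12-y_3)+8M(f_1+f_2)(1-y_3),$$ and $$\hat\alpha(f_1,f_2,f_3,y_1,y_2,y_3)=\frac{1}{(\frac12-\hat F_1)\hat A}\Bigl(\hat A(1-\hat F_1)P_1+P_2+P_3\Bigr).$$ Then for all $f_1,f_2,f_3,y_1,y_2,y_3\in[0,\frac12]$ satisfying $f_1+f_2+2f_3=1$, $6f_1+f_2-1<0$, $4f_1+f_2-\frac34<0$, $\frac1{13}\le f_1\le\frac12$ and $0\le f_2,f_3\le\frac12$, we have $\hat\alpha(f_1,f_2,f_3,y_1,y_2,y_3)\le\frac{9163}{10000}$.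
   Context: In the paper's notation, with $\Phi(x)=\frac{1}{x(\frac12-x)}$, one has $y(\frac12-y)=1/\Phi(y)$ and $\frac{1}{(\frac12-\hat F_1)\hat A}=\frac{\Phi(\hat F_1)\hat F_1}{\hat A}$. Under the hypotheses $0<\hat F_1<\frac12$. *)

From Stdlib Require Import Reals Lra.
Open Scope R_scope.

Definition M : R := 3/2 - sqrt 2.

Definition Ahat (f1 f2 f3 y1 y2 y3 : R) : R :=
  (1 - f1) * (1 - y1) + (1 - f2) * (1 - y2) + 2 * (1 - f3) * (1 - y3).

Definition F1hat (f1 f2 f3 y1 y2 y3 : R) : R :=
  (1 - f1) * (1 - y1) / Ahat f1 f2 f3 y1 y2 y3.

Definition P1 (f1 f2 y1 : R) : R :=
  y1 * (1/2 - y1) / (1 - y1) - 4 * M * f2 / (1 - f1).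

Definition P2 (f1 f2 y2 : R) : R :=
  (1 - f2) * y2 * (1/2 - y2) + 4 * M * f1 * (1 - y2).

Definition P3 (f1 f2 f3 y3 : R) : R :=
  2 * (1 - f3) * y3 * (1/2 - y3) + 8 * M * (f1 + f2) * (1 - y3).

Definition alphahat (f1 f2 f3 y1 y2 y3 : R) : R :=
  let A := Ahat f1 f2 f3 y1 y2 y3 in
  let F := F1hat f1 f2 f3 y1 y2 y3 in
  / ((1/2 - F) * A) * (A * (1 - F) * P1 f1 f2 y1 + P2 f1 f2 y2 + P3 f1 f2 f3 y3).

From Stdlib Require Import Reals Lra Psatz.
Open Scope R_scope.

(* With a = (1-f1)(1-y1) and S = (1-f2)(1-y2) + 2(1-f3)(1-y3) one has Ahat = a + S,
   (1/2 - F1hat) Ahat = (S - a)/2 and Ahat (1 - F1hat) = S, so after clearing the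
   denominator the claim reads S (P1 - kappa/2) + P2 + P3 + kappa a/2 <= 0.  Writing
   Q = kappa/2 - P1, the terms in y2 and y3 are concave quadratics
   p y (1/2 - y) + c (1 - y) - Q p (1 - y), bounded by their vertex values.  These
   decrease in Q, and lowering Q by replacing 4 M f2 / (1 - f1) with 4 M f2 leaves a
   function G of f1, f2, y1.  G decreases in f2 (here 6 f1 + f2 < 1 is used) and
   increases in M, so it remains to treat f2 = 0 with M replaced by a rational upper
   bound.  There G is convex in f1, and at f1 = 1/13 and f1 = 1/6 the product
   G (1 - y1)^2 is a quartic in 1 - y1 that is nonpositive on [1/2, 1]. *)

Definition kappa : R := 9163/10000.
Definition M_hi : R := 857865/10000000.

Lemma M_range : 0 <= M <= M_hi.
Proof.
  assert (Hs : sqrt 2 * sqrt 2 = 2) by (apply sqrt_sqrt; lra).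
  pose proof (sqrt_pos 2).
  unfold M, M_hi; split; nra.
Qed.

Lemma Rdiv_le_of_le_mul (a b c : R) : 0 < c -> a <= b * c -> a / c <= b.
Proof.
  intros Hc H; apply Rmult_le_reg_r with c; [exact Hc |].
  unfold Rdiv; rewrite Rmult_assoc, Rinv_l; lra.
Qed.

Definition h (y : R) : R := y * (1/2 - y) / (1 - y).

Lemma h_range (y : R) : 0 <= y <= 1/2 -> 0 <= h y <= 1/8.
Proof.
  intros Hy; unfold h; split.
  - apply Rle_mult_inv_pos; nra.
  - apply Rdiv_le_of_le_mul; nra.
Qed.

Definition vertex_value (p c Q : R) : R :=
  p * (Q * Q - 3 * Q + 1/4) / 4 + c * (3/2 - Q) / 2 + c * c / (4 * p).

Lemma le_vertex_value (p c Q y : R) : 0 < p ->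
  p * y * (1/2 - y) + c * (1 - y) - Q * (p * (1 - y)) <= vertex_value p c Q.
Proof.
  intros Hp.
  assert (E : vertex_value p c Q - (p * y * (1/2 - y) + c * (1 - y) - Q * (p * (1 - y)))
              = (2 * p * y - (p * (Q + 1/2) - c)) ^ 2 / (4 * p))
    by (unfold vertex_value; field; lra).
  assert (0 <= (2 * p * y - (p * (Q + 1/2) - c)) ^ 2 / (4 * p))
    by (apply Rle_mult_inv_pos; [apply pow2_ge_0 | lra]).
  lra.
Qed.

Lemma vertex_value_antitone (p c Q Q' : R) : 0 < p -> 0 <= c ->
  Q' <= Q -> Q + Q' <= 3 -> vertex_value p c Q <= vertex_value p c Q'.
Proof.
  intros Hp Hc HQ HQQ.
  assert (E : vertex_value p c Q - vertex_value p c Q'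
              = (Q - Q') * (p * (Q + Q' - 3) / 4 - c / 2))
    by (unfold vertex_value; field; lra).
  assert (p * (Q + Q' - 3) / 4 - c / 2 <= 0) by nra.
  nra.
Qed.

Lemma vertex_value_monotone_c (p c c' Q : R) : 0 < p -> 0 <= c <= c' -> Q <= 3/2 ->
  vertex_value p c Q <= vertex_value p c' Q.
Proof.
  intros Hp Hc HQ.
  assert (E : vertex_value p c' Q - vertex_value p c Q
              = (c' - c) * ((3/2 - Q) / 2 + (c' + c) / (4 * p)))
    by (unfold vertex_value; field; lra).
  assert (0 <= (c' + c) / (4 * p)) by (apply Rle_mult_inv_pos; lra).
  nra.
Qed.

Definition G (m f1 f2 y1 : R) : R :=
  let Q := kappa / 2 + 4 * m * f2 - h y1 in
  vertex_value (1 - f2) (4 * m * f1) Q + vertex_value (1 + f1 + f2) (8 * m * (f1 + f2)) Q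
  + kappa * (1 - f1) * (1 - y1) / 2.

Lemma G_convex_nonpos (m a0 a1 a y : R) : -1 < a0 < a1 -> a0 <= a <= a1 ->
  G m a0 0 y <= 0 -> G m a1 0 y <= 0 -> G m a 0 y <= 0.
Proof.
  intros Ha01 Ha H0 H1.
  assert (E : G m a 0 y - ((a1 - a) * G m a0 0 y + (a - a0) * G m a1 0 y) / (a1 - a0)
              = (a - a0) * (a - a1) * (4 * m * m + 16 * m * m / ((1 + a0) * (1 + a1) * (1 + a))))
    by (unfold G, vertex_value; field; lra).
  assert (0 <= 16 * m * m / ((1 + a0) * (1 + a1) * (1 + a)))
    by (apply Rle_mult_inv_pos; [nra | apply Rmult_lt_0_compat; [nra | lra]]).
  assert ((a - a0) * (a - a1) <= 0) by nra.
  assert (((a1 - a) * G m a0 0 y + (a - a0) * G m a1 0 y) / (a1 - a0) <= 0)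
    by (apply Rdiv_le_of_le_mul; nra).
  nra.
Qed.

Definition endpoint_poly (a t : R) : R :=
  let u := (3 - kappa / 2) * t - t * t - 1/2 in
  (2 + a) / 4 * (u * u - 2 * t * t) + 6 * M_hi * a * t * u
  + (4 * M_hi * M_hi * a * a + 16 * M_hi * M_hi * a * a / (1 + a)) * t * t
  + kappa * (1 - a) / 2 * t * t * t.

Lemma G_M_hi_f2_0_scaled (a y : R) : a <> -1 -> y < 1 ->
  G M_hi a 0 y * ((1 - y) * (1 - y)) = endpoint_poly a (1 - y).
Proof. intros Ha Hy; unfold G, vertex_value, endpoint_poly, h; field; lra. Qed.

Lemma endpoint_poly_nonpos (a t : R) : a = 1/13 \/ a = 1/6 -> 1/2 <= t <= 1 ->
  endpoint_poly a t <= 0.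
Proof.
  intros Ha Ht.
  (* Each quartic peaks just below 0 near r = 0.8825 (a = 1/13) resp. r = 0.843 (a = 1/6),
     so (t - r)^2 times the nonnegative factors of [1/2, 1] gives a certificate. *)
  assert (certificate : forall r, 0 <= (t - r) ^ 2 /\ 0 <= (t - r) ^ 2 * (t - 1/2)
            /\ 0 <= (t - r) ^ 2 * (1 - t) /\ 0 <= (t - r) ^ 2 * ((1 - t) * (t - 1/2))).
  { intros r; pose proof (pow2_ge_0 (t - r)) as Hsq.
    assert (0 <= (1 - t) * (t - 1/2)) by nra.
    repeat split; [exact Hsq | apply Rmult_le_pos; [exact Hsq | lra] ..]. }
  unfold endpoint_poly, kappa, M_hi.
  destruct Ha as [-> | ->].
  - pose proof (certificate (8825/10000)); lra.
  - pose proof (certificate (843/1000)); lra.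
Qed.

Lemma G_M_hi_f2_0_nonpos (f1 y1 : R) : 1/13 <= f1 <= 1/6 -> 0 <= y1 <= 1/2 ->
  G M_hi f1 0 y1 <= 0.
Proof.
  intros Hf1 Hy1.
  assert (end_nonpos : forall a, a = 1/13 \/ a = 1/6 -> G M_hi a 0 y1 <= 0).
  { intros a Ha.
    assert (0 < (1 - y1) * (1 - y1)) by nra.
    pose proof (endpoint_poly_nonpos a (1 - y1) Ha ltac:(lra)).
    pose proof (G_M_hi_f2_0_scaled a y1 ltac:(destruct Ha; lra) ltac:(lra)).
    nra. }
  apply (G_convex_nonpos M_hi (1/13) (1/6)); try lra; apply end_nonpos; auto.
Qed.

Lemma G_f2_0_le_M_hi (m f1 y1 : R) : 0 <= m <= M_hi -> 0 <= f1 -> 0 <= y1 <= 1/2 ->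
  G m f1 0 y1 <= G M_hi f1 0 y1.
Proof.
  intros Hm Hf1 Hy1.
  pose proof (h_range y1 Hy1).
  unfold G; rewrite !Rmult_0_r, !Rplus_0_r.
  assert (Q_le : kappa / 2 - h y1 <= 3/2) by (unfold kappa; lra).
  pose proof (vertex_value_monotone_c (1 - 0) (4 * m * f1) (4 * M_hi * f1) _ ltac:(lra)
                ltac:(split; nra) Q_le).
  pose proof (vertex_value_monotone_c (1 + f1) (8 * m * f1) (8 * M_hi * f1) _ ltac:(lra)
                ltac:(split; nra) Q_le).
  lra.
Qed.

Lemma f2_slope_le (f1 f2 : R) : 1/13 <= f1 <= 1/6 -> 0 <= f2 <= 1/2 -> f2 <= 1 - 6 * f1 ->
  (4 * f1 - 8) * f2 - 24 * f1 + 4 * f1 * f1 / (1 - f2) + 16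
  - 16 / ((1 + f1) * (1 + f1 + f2)) <= 15 * f1.
Proof.
  intros Hf1 Hf2 Hf12.
  set (D := (1 + f1) * (1 + f1 + f2)).
  assert (HD : 0 < D) by (unfold D; nra).
  assert (first_le : 4 * f1 * f1 / (1 - f2) <= 8 * f1 * f1)
    by (apply Rdiv_le_of_le_mul; nra).
  assert (second_le : 16 * (D - 1) / D <= 39 * f1 - 8 * f1 * f1 - (4 * f1 - 8) * f2).
  { apply Rdiv_le_of_le_mul; [exact HD |]. unfold D.
    assert (0 <= (f2 - 31/100) ^ 2) by apply pow2_ge_0.
    assert (0 <= (f1 - 1/13) * f2) by nra.
    assert (0 <= (f1 - 1/13) * f2 * f2) by nra.
    assert (0 <= (f1 - 1/13) * f1 * f2) by nra.
    assert (0 <= (f1 - 1/13) * f1) by nra.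
    assert (0 <= (f1 - 1/13) * f1 * f1) by nra.
    assert (0 <= (1/6 - f1) * f1 * f1 * f1) by nra.
    assert (0 <= (1/6 - f1) * f1 * f1 * f2) by nra.
    assert (0 <= (1/2 - f2) * f1 * f1 * f2) by nra.
    lra. }
  assert (16 - 16 / D = 16 * (D - 1) / D) by (field; lra).
  lra.
Qed.

Lemma G_le_G_f2_0 (m f1 f2 y1 : R) : 0 <= m <= M_hi -> 1/13 <= f1 <= 1/6 ->
  0 <= f2 <= 1/2 -> f2 <= 1 - 6 * f1 -> 0 <= y1 <= 1/2 ->
  G m f1 f2 y1 <= G m f1 0 y1.
Proof.
  intros Hm Hf1 Hf2 Hf12 Hy1.
  pose proof (h_range y1 Hy1).
  set (s := 3/2 - kappa / 2 + h y1).
  set (X := (4 * f1 - 8) * f2 - 24 * f1 + 4 * f1 * f1 / (1 - f2) + 16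
            - 16 / ((1 + f1) * (1 + f1 + f2))).
  assert (E : G m f1 f2 y1 - G m f1 0 y1 = m * f2 * (m * X - 2 * f1 * s)).
  { unfold G, vertex_value, s, X. field. repeat split; nra. }
  pose proof (f2_slope_le f1 f2 Hf1 Hf2 Hf12) as HX; fold X in HX.
  assert (Hs : 1 <= s) by (unfold s, kappa; lra).
  (* 15 * M_hi < 2 <= 2 * s *)
  assert (m * X <= 15 * M_hi * f1) by (unfold M_hi in *; nra).
  assert (m * X - 2 * f1 * s <= 0) by (unfold M_hi in *; nra).
  assert (0 <= m * f2) by nra.
  nra.
Qed.

Lemma G_nonpos (m f1 f2 y1 : R) : 0 <= m <= M_hi -> 1/13 <= f1 <= 1/6 ->
  0 <= f2 <= 1/2 -> f2 <= 1 - 6 * f1 -> 0 <= y1 <= 1/2 -> G m f1 f2 y1 <= 0.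
Proof.
  intros Hm Hf1 Hf2 Hf12 Hy1.
  pose proof (G_le_G_f2_0 m f1 f2 y1 Hm Hf1 Hf2 Hf12 Hy1).
  pose proof (G_f2_0_le_M_hi m f1 y1 Hm ltac:(lra) Hy1).
  pose proof (G_M_hi_f2_0_nonpos f1 y1 Hf1 Hy1).
  lra.
Qed.

Lemma alphahat_le_of (K f1 f2 f3 y1 y2 y3 : R) :
  0 <= (1 - f1) * (1 - y1) < (1 - f2) * (1 - y2) + 2 * (1 - f3) * (1 - y3) ->
  ((1 - f2) * (1 - y2) + 2 * (1 - f3) * (1 - y3)) * (P1 f1 f2 y1 - K / 2)
  + P2 f1 f2 y2 + P3 f1 f2 f3 y3 + K * ((1 - f1) * (1 - y1)) / 2 <= 0 ->
  alphahat f1 f2 f3 y1 y2 y3 <= K.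
Proof.
  set (a := (1 - f1) * (1 - y1)).
  set (S := (1 - f2) * (1 - y2) + 2 * (1 - f3) * (1 - y3)).
  intros Ha Hle.
  assert (E : alphahat f1 f2 f3 y1 y2 y3
              = (S * P1 f1 f2 y1 + P2 f1 f2 y2 + P3 f1 f2 f3 y3) / ((S - a) / 2)).
  { unfold alphahat, F1hat, Ahat, a, S in *; cbv zeta. field; lra. }
  rewrite E; apply Rdiv_le_of_le_mul; lra.
Qed.

Lemma alphahat_numerator_le_G (f1 f2 f3 y1 y2 y3 : R) :
  0 <= f1 <= 1/6 -> 0 <= f2 <= 1/2 -> 0 <= y1 <= 1/2 -> f1 + f2 + 2 * f3 = 1 ->
  ((1 - f2) * (1 - y2) + 2 * (1 - f3) * (1 - y3)) * (P1 f1 f2 y1 - kappa / 2)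
  + P2 f1 f2 y2 + P3 f1 f2 f3 y3 + kappa * ((1 - f1) * (1 - y1)) / 2 <= G M f1 f2 y1.
Proof.
  intros Hf1 Hf2 Hy1 Hsum.
  pose proof M_range as HM. pose proof (h_range y1 Hy1).
  set (Q := kappa / 2 - P1 f1 f2 y1).
  set (Q' := kappa / 2 + 4 * M * f2 - h y1).
  assert (Q_le : Q <= 1).
  { assert (4 * M * f2 / (1 - f1) <= 1/2)
      by (apply Rdiv_le_of_le_mul; unfold M_hi in *; nra).
    unfold Q, P1, kappa; fold (h y1); lra. }
  assert (Q'_le_Q : Q' <= Q).
  { assert (E : Q - Q' = 4 * M * f2 * f1 / (1 - f1)) by (unfold Q, Q', P1, h; field; lra).
    assert (0 <= 4 * M * f2 * f1 / (1 - f1))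
      by (apply Rle_mult_inv_pos; [repeat apply Rmult_le_pos | ]; lra).
    lra. }
  assert (p3 : 2 * (1 - f3) = 1 + f1 + f2) by lra.
  pose proof (le_vertex_value (1 - f2) (4 * M * f1) Q y2 ltac:(lra)) as V2.
  pose proof (le_vertex_value (2 * (1 - f3)) (8 * M * (f1 + f2)) Q y3 ltac:(lra)) as V3.
  rewrite p3 in V3.
  pose proof (vertex_value_antitone (1 - f2) (4 * M * f1) Q Q' ltac:(lra) ltac:(nra)
                Q'_le_Q ltac:(lra)).
  pose proof (vertex_value_antitone (1 + f1 + f2) (8 * M * (f1 + f2)) Q Q' ltac:(lra)
                ltac:(nra) Q'_le_Q ltac:(lra)).
  unfold G, P2, P3; fold Q'; rewrite p3.
  unfold Q in *. lra.
Qed.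

Theorem lemma22 (f1 f2 f3 y1 y2 y3 : R) :
  0 <= f1 <= 1/2 -> 0 <= f2 <= 1/2 -> 0 <= f3 <= 1/2 ->
  0 <= y1 <= 1/2 -> 0 <= y2 <= 1/2 -> 0 <= y3 <= 1/2 ->
  f1 + f2 + 2 * f3 = 1 ->
  6 * f1 + f2 - 1 < 0 ->
  4 * f1 + f2 - 3/4 < 0 ->
  1/13 <= f1 <= 1/2 ->
  alphahat f1 f2 f3 y1 y2 y3 <= 9163/10000.
Proof.
  intros _ Hf2 _ Hy1 Hy2 Hy3 Hsum H6 _ H13.
  assert (Hf1 : 1/13 <= f1 <= 1/6) by lra.
  apply alphahat_le_of.
  - split; nra.
  - pose proof (alphahat_numerator_le_G f1 f2 f3 y1 y2 y3 ltac:(lra) Hf2 Hy1 Hsum).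
    pose proof (G_nonpos M f1 f2 y1 M_range Hf1 Hf2 ltac:(lra) Hy1).
    unfold kappa in *; lra.
Qed.
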